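(* Fix $\eta>0$, let $\mu\in\mathbb{L}_2$ and $\lambda\in\mathbb{R}^{2md}$, and let $\delta=\max_{e\in E,i\in e}\|\nu^\lambda_{e,i}\|_1$. Then there exists $\hat\mu$ in the slack polytope $\mathbb{L}_2^{\nu^\lambda}$ such that $$\|\mu-\hat\mu\|_1\le16(m+n)d\delta+2\sum_{e\in E,i\in e}\|\nu^\lambda_{e,i}\|_1.$$
   Context: Let $G=(V,E)$ be a finite undirected graph with $n=|V|$, $m=|E|$, every vertex incident to at least one edge; $N_i=\{e\in E:i\in e\}$. $\chi$ is a finite label set with $d=|\chi|\ge2$. Costs $C_i\in\mathbb{R}^\chi$, $C_e\in\mathbb{R}^{\chi^2}$; for $e=\{i,j\}$, $x_e=(x_i,x_j)$, $(x_e)_i=x_i$. For $\mu=((\mu_i)_{i\in V},(\mu_e)_{e\in E})$, $\|\mu\|_1$ is the sum of absolute values of all entries. $\mathbb{L}_2=\{\mu\ge0:\mu_i\in\Sigma^d\ \forall i,\ \sum_{x_e:(x_e)_i=x}\mu_e(x_e)=\mu_i(x)\ \forall e,\,i\in e,\,x\}$, $\Sigma^d$ the probability simplex on $\chi$. For a vector $\nu=(\nu_{e,i})_{e\in E,i\in e}$, $\nu_{e,i}\in\mathbb{R}^\chi$, the slack polytope is $\mathbb{L}_2^\nu=\{\mu\ge0:\mu_i\in\Sigma^d\ \forall i,\ \sum_{x_e:(x_e)_i=x}\mu_e(x_e)=\mu_i(x)+\nu_{e,i}(x)\ \forall e,\,i\in e,\,x\}$. For $\lambda\in\mathbb{R}^{2md}$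 (indexed by $(e,i,x)$): $\mu^\lambda_i(x)\propto\exp(-\eta C_i(x)+\eta\sum_{e\in N_i}\lambda_{e,i}(x))$, $\mu^\lambda_e(x_e)\propto\exp(-\eta C_e(x_e)-\eta\sum_{i\in e}\lambda_{e,i}((x_e)_i))$, each normalized; $S^\lambda_{e,i}(x)=\sum_{x_e:(x_e)_i=x}\mu^\lambda_e(x_e)$; slack $\nu^\lambda_{e,i}=S^\lambda_{e,i}-\mu^\lambda_i$. *)

From HB Require Import structures.
From mathcomp Require Import all_boot all_order all_algebra.
From mathcomp Require Import reals.
From mathcomp Require Import sequences exp.
Set Implicit Arguments. Unset Strict Implicit. Unset Printing Implicit Defensive.
Import Order.TTheory GRing.Theory Num.Theory.
Local Open Scope ring_scope.

(* Graph encoding: vertices V : finType, edges E : finType, each edge e has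
   two endpoints [ends e false] and [ends e true]; the pair (e, b) encodes
   "i in e" with i = ends e b.  A labelling x_e of edge e is a pair
   (x, y) : chi * chi with x the label of [ends e false] and y that of
   [ends e true]. *)

Section Defs.
Variables (R : realType) (V chi E : finType) (ends : E -> bool -> V).

Definition simple_graph : Prop :=
  (forall e, ends e false != ends e true) /\
  (forall e e', [set ends e false; ends e true] = [set ends e' false; ends e' true] -> e = e').

Definition no_isolated : Prop := forall i : V, exists e b, ends e b = i.

Definition proj (b : bool) (xe : chi * chi) : chi := if b then xe.2 else xe.1.

Definition marg (muE : E -> chi -> chi -> R) (e : E) (b : bool) (x : chi) : R :=
  \sum_(xe : chi * chi | proj b xe == x) muE e xe.1 xe.2.

Definition in_L2nu (nu : E -> bool -> chi -> R)
    (muV : V -> chi -> R) (muE : E -> chi -> chi -> R) : Prop :=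
  [/\ forall i x, 0 <= muV i x,
      forall e x y, 0 <= muE e x y,
      forall i, \sum_x muV i x = 1 &
      forall e b x, marg muE e b x = muV (ends e b) x + nu e b x].

Definition in_L2 muV muE : Prop := in_L2nu (fun _ _ _ => 0) muV muE.

Definition norm1 (muV : V -> chi -> R) (muE : E -> chi -> chi -> R) : R :=
  \sum_i \sum_x `|muV i x| + \sum_e \sum_(xe : chi * chi) `|muE e xe.1 xe.2|.

Variables (eta : R) (CV : V -> chi -> R) (CE : E -> chi -> chi -> R)
  (lam : E -> bool -> chi -> R).

Definition wV (i : V) (x : chi) : R :=
  expR (- eta * CV i x + eta * \sum_(p : E * bool | ends p.1 p.2 == i) lam p.1 p.2 x).

Definition muV_lam (i : V) (x : chi) : R := wV i x / \sum_x' wV i x'.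

Definition wE (e : E) (x y : chi) : R :=
  expR (- eta * CE e x y - eta * (lam e false x + lam e true y)).

Definition muE_lam (e : E) (x y : chi) : R :=
  wE e x y / \sum_(xe : chi * chi) wE e xe.1 xe.2.

Definition nu_lam (e : E) (b : bool) (x : chi) : R :=
  marg muE_lam e b x - muV_lam (ends e b) x.

Definition nu_norm (e : E) (b : bool) : R := \sum_x `|nu_lam e b x|.

Definition delta_lam : R := \big[Num.max/0]_(p : E * bool) nu_norm p.1 p.2.

End Defs.

From HB Require Import structures.
From mathcomp Require Import all_boot all_order all_algebra.
From mathcomp Require Import reals.
From mathcomp Require Import sequences exp.
From mathcomp.algebra_tactics Require Import ring lra.
Set Implicit Arguments. Unset Strict Implicit. Unset Printing Implicit Defensive.
Import Order.TTheory GRing.Theory Num.Theory.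
Local Open Scope ring_scope.

(* Let nu be a slack vector whose blocks nu_{e,i} sum to zero and whose
   entries are bounded by delta, and put s = d * delta.  Given mu in L_2 we
   repair it into a point of L_2^nu: every node marginal becomes
   (1 - s) mu_i + delta (uniform mass delta added) and every edge marginal
   becomes (1 - s) mu_e + A_{e,i} (x) A_{e,j} / s, where A_{e,i} = delta +
   nu_{e,i} >= 0 has total mass s.  When s <= 1 this is a point of L_2^nu
   at l1-distance at most 2s from mu on each node and each edge.  When
   s > 1 any point of L_2^nu is within 2 <= 2s of mu blockwise, so the
   bound 2 s (m + n) holds whenever L_2^nu is nonempty. *)

Lemma sum_absB_le (R : numDomainType) (I : finType) (p q : I -> R) :
  (forall i, 0 <= p i) -> (forall i, 0 <= q i) ->
  \sum_i `|p i - q i| <= \sum_i p i + \sum_i q i.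
Proof.
move=> p_ge0 q_ge0; rewrite -big_split /=; apply: ler_sum => i _.
by apply: le_trans (ler_normB _ _) _; rewrite !ger0_norm.
Qed.

Lemma ler_term_sum (R : numDomainType) (I : finType) (F : I -> R) (i : I) :
  (forall j, 0 <= F j) -> F i <= \sum_j F j.
Proof. by move=> F_ge0; rewrite (bigD1 i) //= lerDl sumr_ge0. Qed.

Lemma sum_normalized (R : numFieldType) (I : finType) (w : I -> R) (i0 : I) :
  (forall i, 0 < w i) -> \sum_i w i / \sum_j w j = 1.
Proof.
move=> w_gt0; rewrite -mulr_suml divff // gt_eqF //.
rewrite (bigD1 i0) //=; apply: (lt_le_trans (w_gt0 i0)).
by rewrite lerDl sumr_ge0 // => j _; apply/ltW.
Qed.

(* [s^-1 * s] acts as the identity on quantities dominated by s, including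
   the degenerate case s = 0, where such quantities vanish. *)
Lemma dominated_mulVK (R : numFieldType) (s a : R) :
  0 <= a -> a <= s -> s^-1 * s * a = a.
Proof.
move=> a_ge0 a_le; have [s0|s_neq0] := eqVneq s 0; last by rewrite mulVf // mul1r.
rewrite s0 mulr0 mul0r; apply/eqP; rewrite eq_le a_ge0.
by rewrite s0 in a_le.
Qed.

Section Marginals.
Variables (R : realType) (chi E : finType) (F : E -> chi -> chi -> R).

Lemma marg_false e x : marg F e false x = \sum_y F e x y.
Proof.
rewrite /marg (eq_bigl (fun xe : chi * chi => (xe.1 == x) && true)); last first.
  by move=> [a b] /=; rewrite andbT.
rewrite -(pair_big_dep (fun i => i == x) (fun _ _ => true) (fun i j => F e i j)) /=.
by rewrite big_pred1_eq.
Qed.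

Lemma marg_true e x : marg F e true x = \sum_y F e y x.
Proof.
rewrite /marg (eq_bigl (fun xe : chi * chi => true && (xe.2 == x))) //.
rewrite -(pair_big_dep (fun _ => true) (fun i j => j == x) (fun i j => F e i j)) /=.
by apply: eq_bigr => i _; rewrite big_pred1_eq.
Qed.

Lemma sum_marg e b :
  \sum_x marg F e b x = \sum_(xe : chi * chi) F e xe.1 xe.2.
Proof.
rewrite -(pair_bigA _ (F e)); case: b.
  by rewrite (eq_bigr _ (fun x _ => marg_true e x)) exchange_big.
by rewrite (eq_bigr _ (fun x _ => marg_false e x)).
Qed.

End Marginals.

Section SlackPolytope.
Variables (R : realType) (V chi E : finType) (ends : E -> bool -> V).

Definition zero_sum (nu : E -> bool -> chi -> R) : Prop :=
  forall e b, \sum_x nu e b x = 0.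

Lemma zero_sum0 : zero_sum (fun _ _ _ => 0).
Proof. by move=> e b; rewrite big1_eq. Qed.

Lemma L2nu_edge_mass nu hV hE :
  zero_sum nu -> in_L2nu ends nu hV hE ->
  forall e, \sum_(xe : chi * chi) hE e xe.1 xe.2 = 1.
Proof.
move=> nu0 [_ _ hV1 hM] e; rewrite -(sum_marg hE e false).
by rewrite (eq_bigr _ (fun x _ => hM e false x)) big_split /= hV1 nu0 addr0.
Qed.

Lemma norm1_le (fV : V -> chi -> R) (fE : E -> chi -> chi -> R) c :
  (forall i, \sum_x `|fV i x| <= c) ->
  (forall e, \sum_(xe : chi * chi) `|fE e xe.1 xe.2| <= c) ->
  norm1 fV fE <= c * (#|E| + #|V|)%:R.
Proof.
move=> hV hE; rewrite /norm1 natrD mulrDr [c * _ + _]addrC.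
apply: lerD.
  apply: (@le_trans _ _ (\sum_(i : V) c)); first exact: ler_sum.
  by rewrite sumr_const mulr_natr.
apply: (@le_trans _ _ (\sum_(e : E) c)); first exact: ler_sum.
by rewrite sumr_const mulr_natr.
Qed.

Lemma L2nu_dist nu nu' muV muE hV hE :
  zero_sum nu -> zero_sum nu' ->
  in_L2nu ends nu muV muE -> in_L2nu ends nu' hV hE ->
  norm1 (fun i x => muV i x - hV i x) (fun e x y => muE e x y - hE e x y)
    <= 2 * (#|E| + #|V|)%:R.
Proof.
move=> nu0 nu'0 Hmu Hh; have [muV0 muE0 muV1 _] := Hmu.
have [hV0 hE0 hV1 _] := Hh.
apply: norm1_le => [i|e].
  by apply: le_trans (sum_absB_le _ _) _ => //; rewrite muV1 hV1.
apply: le_trans (sum_absB_le (p := fun xe : chi * chi => muE e xe.1 xe.2)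
                              (q := fun xe => hE e xe.1 xe.2) _ _) _ => //.
by rewrite (L2nu_edge_mass nu0 Hmu) (L2nu_edge_mass nu'0 Hh).
Qed.

Section Repair.
Variables (nu : E -> bool -> chi -> R) (dl : R).
Variables (muV : V -> chi -> R) (muE : E -> chi -> chi -> R).
Hypothesis Hmu : in_L2 ends muV muE.
Hypothesis nu0 : zero_sum nu.
Hypothesis dl_ge0 : 0 <= dl.
Hypothesis nu_le : forall e b x, `|nu e b x| <= dl.

Definition mass : R := #|chi|%:R * dl.

Definition shifted e b x : R := dl + nu e b x.

Definition repairV i x : R := (1 - mass) * muV i x + dl.

Definition repairE e x y : R :=
  (1 - mass) * muE e x y + mass^-1 * shifted e false x * shifted e true y.

Lemma mass_ge0 : 0 <= mass.
Proof. exact: mulr_ge0. Qed.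

Lemma shifted_ge0 e b x : 0 <= shifted e b x.
Proof. by have := nu_le e b x; rewrite ler_norml /shifted => /andP[? _]; lra. Qed.

Lemma shifted_sum e b : \sum_x shifted e b x = mass.
Proof. by rewrite big_split /= nu0 addr0 sumr_const -mulr_natr mulrC. Qed.

(* The product block A_{e,i} (x) A_{e,j} / s has marginals A_{e,i}, A_{e,j}. *)
Lemma shifted_mulVK e b x : mass^-1 * mass * shifted e b x = shifted e b x.
Proof.
apply: dominated_mulVK; first exact: shifted_ge0.
rewrite -(shifted_sum e b); apply: ler_term_sum => y; exact: shifted_ge0.
Qed.

Lemma mass_mulVK : mass^-1 * mass * mass = mass.
Proof. exact: dominated_mulVK mass_ge0 _. Qed.

Lemma muE_marg e b x : marg muE e b x = muV (ends e b) x.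
Proof. by case: Hmu => _ _ _ /(_ e b x); rewrite addr0. Qed.

Lemma repair_in_L2nu : mass <= 1 -> in_L2nu ends nu repairV repairE.
Proof.
case: Hmu => muV0 muE0 muV1 _ mass_le1; split.
- move=> i x; apply: addr_ge0 => //; apply: mulr_ge0 => //; lra.
- move=> e x y; apply: addr_ge0; first by apply: mulr_ge0 => //; lra.
  apply: mulr_ge0; last exact: shifted_ge0.
  by apply: mulr_ge0; [rewrite invr_ge0 mass_ge0|exact: shifted_ge0].
- move=> i; rewrite big_split /= -mulr_sumr muV1 sumr_const -mulr_natr.
  by rewrite /mass; ring.
- move=> e [|] x.
  + rewrite marg_true big_split /= -mulr_sumr -(marg_true muE) muE_marg.
    rewrite -mulr_suml -mulr_sumr shifted_sum shifted_mulVK.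
    by rewrite /repairV /shifted; ring.
  + rewrite marg_false big_split /= -mulr_sumr -(marg_false muE) muE_marg.
    rewrite -mulr_sumr shifted_sum [mass^-1 * _ * _]mulrAC shifted_mulVK.
    by rewrite /repairV /shifted; ring.
Qed.

Lemma repairV_dist i : \sum_x `|muV i x - repairV i x| <= 2 * mass.
Proof.
case: Hmu => muV0 _ muV1 _.
rewrite (eq_bigr (fun x => `|mass * muV i x - dl|)); last first.
  by move=> x _; congr `|_|; rewrite /repairV; ring.
apply: le_trans (sum_absB_le _ _) _.
- by move=> x; apply: mulr_ge0; [exact: mass_ge0|].
- by move=> x.
rewrite -mulr_sumr muV1 sumr_const -mulr_natr /mass; lra.
Qed.

Lemma repairE_dist e :
  \sum_(xe : chi * chi) `|muE e xe.1 xe.2 - repairE e xe.1 xe.2| <= 2 * mass.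
Proof.
case: Hmu => _ muE0 _ _.
pose B x y := mass^-1 * shifted e false x * shifted e true y.
rewrite (eq_bigr (fun xe => `|mass * muE e xe.1 xe.2 - B xe.1 xe.2|)); last first.
  by move=> xe _; congr `|_|; rewrite /repairE /B; ring.
apply: le_trans (sum_absB_le (p := fun xe : chi * chi => mass * muE e xe.1 xe.2)
                              (q := fun xe => B xe.1 xe.2) _ _) _.
- by move=> xe; apply: mulr_ge0; [exact: mass_ge0|].
- move=> xe; apply: mulr_ge0; last exact: shifted_ge0.
  by apply: mulr_ge0; [rewrite invr_ge0 mass_ge0|exact: shifted_ge0].
rewrite -mulr_sumr (L2nu_edge_mass zero_sum0 Hmu) -(pair_bigA _ B) /B.
rewrite (eq_bigr (fun x => mass^-1 * shifted e false x * mass)); last first.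
  by move=> x _; rewrite -mulr_sumr shifted_sum.
rewrite -mulr_suml -mulr_sumr shifted_sum mulrAC mass_mulVK /mass; lra.
Qed.

End Repair.

Lemma close_slack_point nu dl muV muE :
  in_L2 ends muV muE -> zero_sum nu -> 0 <= dl ->
  (forall e b x, `|nu e b x| <= dl) ->
  (exists hV hE, in_L2nu ends nu hV hE) ->
  exists hV hE, in_L2nu ends nu hV hE /\
    norm1 (fun i x => muV i x - hV i x) (fun e x y => muE e x y - hE e x y)
      <= 2 * (#|chi|%:R * dl) * (#|E| + #|V|)%:R.
Proof.
move=> Hmu nu0 dl_ge0 nu_le [fV [fE Hf]].
have N_ge0 : 0 <= (#|E| + #|V|)%:R :> R by [].
have [mass_le1|mass_gt1] := leP (mass dl) 1.
  exists (repairV dl muV), (repairE nu dl muE); split.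
    exact: repair_in_L2nu.
  apply: norm1_le => [i|e]; first exact: repairV_dist Hmu dl_ge0 i.
  exact: repairE_dist Hmu nu0 dl_ge0 nu_le e.
exists fV, fE; split => //.
apply: le_trans (L2nu_dist zero_sum0 nu0 Hmu Hf) _.
rewrite -mulrA ler_pM2l // -[X in X <= _]mul1r ler_wpM2r //; exact/ltW.
Qed.

End SlackPolytope.

Section LambdaMarginals.
Variables (R : realType) (V chi E : finType) (ends : E -> bool -> V).
Variables (eta : R) (CV : V -> chi -> R) (CE : E -> chi -> chi -> R).
Variables (lam : E -> bool -> chi -> R) (x0 : chi).

Local Notation muV := (muV_lam ends eta CV lam).
Local Notation muE := (muE_lam eta CE lam).
Local Notation nu := (nu_lam ends eta CV CE lam).
Local Notation delta := (delta_lam ends eta CV CE lam).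

Lemma muV_lam_ge0 i x : 0 <= muV i x.
Proof. by apply: divr_ge0; [|apply: sumr_ge0 => ? _]; apply/ltW/expR_gt0. Qed.

Lemma muE_lam_ge0 e x y : 0 <= muE e x y.
Proof. by apply: divr_ge0; [|apply: sumr_ge0 => ? _]; apply/ltW/expR_gt0. Qed.

Lemma muV_lam_sum i : \sum_x muV i x = 1.
Proof. by apply: (sum_normalized x0) => x; apply: expR_gt0. Qed.

Lemma muE_lam_sum e : \sum_(xe : chi * chi) muE e xe.1 xe.2 = 1.
Proof.
exact: (sum_normalized (x0, x0) (fun xe => expR_gt0 _)).
Qed.

Lemma mu_lam_in_L2nu : in_L2nu ends nu muV muE.
Proof.
split; [exact: muV_lam_ge0 | exact: muE_lam_ge0 | exact: muV_lam_sum |].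
by move=> e b x; rewrite /nu_lam addrC subrK.
Qed.

Lemma nu_lam_zero_sum : zero_sum nu.
Proof.
by move=> e b; rewrite sumrB sum_marg muE_lam_sum muV_lam_sum subrr.
Qed.

Lemma nu_norm_ge0 e b : 0 <= nu_norm ends eta CV CE lam e b.
Proof. exact: sumr_ge0. Qed.

Lemma delta_lam_ge0 : 0 <= delta.
Proof.
rewrite /delta_lam; elim/big_ind: _ => // [a b ha _|p _]; last exact: nu_norm_ge0.
by rewrite le_max ha.
Qed.

Lemma nu_lam_le_delta e b x : `|nu e b x| <= delta.
Proof.
apply: le_trans (le_bigmax 0 (fun p : E * bool => nu_norm ends eta CV CE lam p.1 p.2) (e, b)).
exact: (ler_term_sum (F := fun x => `|nu e b x|)).
Qed.

End LambdaMarginals.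

Theorem lemma6 (R : realType) (V chi E : finType) (ends : E -> bool -> V)
  (Hsimple : simple_graph ends) (Hinc : no_isolated ends)
  (Hd : (2 <= #|chi|)%N)
  (CV : V -> chi -> R) (CE : E -> chi -> chi -> R)
  (eta : R) (Heta : 0 < eta)
  (muV : V -> chi -> R) (muE : E -> chi -> chi -> R)
  (Hmu : in_L2 ends muV muE)
  (lam : E -> bool -> chi -> R) :
  exists (hV : V -> chi -> R) (hE : E -> chi -> chi -> R),
    in_L2nu ends (nu_lam ends eta CV CE lam) hV hE /\
    norm1 (fun i x => muV i x - hV i x) (fun e x y => muE e x y - hE e x y)
      <= 16 * ((#|E| + #|V|)%:R) * (#|chi|%:R) * delta_lam ends eta CV CE lam
         + 2 * \sum_(e : E) \sum_(b : bool) nu_norm ends eta CV CE lam e b.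
Proof.
have /card_gt0P [x0 _] : (0 < #|chi|)%N by apply: leq_trans Hd.
have delta_ge0 := delta_lam_ge0 ends eta CV CE lam.
have [hV [hE [Hh hdist]]] :=
  close_slack_point Hmu (nu_lam_zero_sum ends eta CV CE lam x0) delta_ge0
    (nu_lam_le_delta ends eta CV CE lam)
    (ex_intro _ _ (ex_intro _ _ (mu_lam_in_L2nu ends eta CV CE lam x0))).
exists hV, hE; split => //; apply: le_trans hdist _.
have S_ge0 : 0 <= \sum_(e : E) \sum_(b : bool) nu_norm ends eta CV CE lam e b.
  by do 2![apply: sumr_ge0 => ? _]; exact: nu_norm_ge0.
move: S_ge0 delta_ge0; set S := \sum_(e : E) _; set dl := delta_lam _ _ _ _ _.
set c := #|chi|%:R; set N := (#|E| + #|V|)%:R => S_ge0 dl_ge0.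
have X_ge0 : 0 <= 2 * (c * dl) * N by rewrite !mulr_ge0.
have -> : 16 * N * c * dl = 8 * (2 * (c * dl) * N) by ring.
lra.
Qed.
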